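(* Let $F$ be a global function field with full constant field $\mathbb{F}_q$ and rational places $P_1,\dots,P_n$; fix $m\ge1$. Let $r\ge t\ge0$ and $j_1,\dots,j_m\ge0$ be integers with $mn-(j_1+2j_2+\cdots+mj_m)\le t\le(m+1)n-(2j_1+\cdots+(m+1)j_m)$, and put $w=j_1+2j_2+\cdots+mj_m$. Then $$|\mathcal{U}(r,t;j_1,\dots,j_m)|=\binom{n}{j_m}\binom{n-j_m}{j_{m-1}}\cdots\binom{n-(j_2+\cdots+j_m)}{j_1}\binom{n-(j_1+\cdots+j_m)}{t-mn+w}\,C_{r-mn+w,\;t-mn+w}.$$
   Context: For a positive divisor $D$: $\overline D=\sum_{i=1}^n\min(m+1,v_{P_i}(D))P_i$, $j_\ell(D)=|\{i:v_{P_i}(D)=m-\ell\}|$. $\mathcal{U}(r,t;j_1,\dots,j_m)$ is the set of positive divisors $D$ with $\deg D=r$, $\deg\overline D=t$, $j_\ell(D)=j_\ell$ ($1\le\ell\le m$). For integers $a\ge b\ge0$ with $b\le n$, $C_{a,b}$ is the number of positive divisors $D$ of $F$ of degree $a$ with ${\rm supp}(\overline D)=\{Q_1,\dots,Q_b\}$ (i.e. $v_{Q_k}(D)\ge1$ for all $k$ and $v_P(D)=0$ for all other rational places $P$), for a fixed set $\{Q_1,\dots,Q_b\}$ of $b$ rational places; this number depends only on $b$, not on the chosen set. *)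

From mathcomp Require Import all_boot.
From mathcomp Require Import finmap.
Set Implicit Arguments. Unset Strict Implicit. Unset Printing Implicit Defensive.
Local Open Scope fset_scope.

(* Abstract model of the places of a global function field F:
   a type [P] of places with a degree map [deg].  A positive divisor is a
   finitely supported function  P -> nat  (its valuations). *)
Definition pdivisor (P : choiceType) := {fsfun P -> nat with 0%N}.

Definition ddeg (P : choiceType) (deg : P -> nat) (D : pdivisor P) : nat :=
  (\sum_(p <- finsupp D) D p * deg p)%N.

(* deg (Dbar) where Dbar = sum_i min(m+1, v_{P_i}(D)) P_i (all P_i rational) *)
Definition degbar (P : choiceType) (n m : nat) (Pr : 'I_n -> P) (D : pdivisor P)
  : nat := (\sum_(i < n) minn m.+1 (D (Pr i)))%N.

Definition jcount (P : choiceType) (n m : nat) (Pr : 'I_n -> P)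
  (D : pdivisor P) (l : nat) : nat := #|[pred i : 'I_n | D (Pr i) == m - l]|.

Definition inU (P : choiceType) (deg : P -> nat) (n m : nat) (Pr : 'I_n -> P)
  (r t : nat) (j : nat -> nat) (D : pdivisor P) : Prop :=
  [/\ ddeg deg D = r, degbar m Pr D = t &
      forall l, 1 <= l <= m -> jcount m Pr D l = j l].

(* D is counted by C_{a,b}, with the fixed set {Q_1..Q_b} = {P_1..P_b}:
   deg D = a, v_{P_i}(D) >= 1 for i < b and v_{P_i}(D) = 0 for i >= b. *)
Definition inC (P : choiceType) (deg : P -> nat) (n : nat) (Pr : 'I_n -> P)
  (a b : nat) (D : pdivisor P) : Prop :=
  ddeg deg D = a /\ forall i : 'I_n, (i < b -> 0 < D (Pr i)) /\ (b <= i -> D (Pr i) = 0).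

Definition enumerates (T : eqType) (s : seq T) (A : T -> Prop) : Prop :=
  uniq s /\ forall x, x \in s <-> A x.

(* Record a divisor D by its pattern c(i) = min(m+1, v_{P_i}(D)).  Since
   sum_i c(i) + sum_l l #{c = m - l} = m n + #{c = m + 1}, D lies in U(r,t;j) exactly
   when deg D = r, c takes the value m - l on j_l places and the saturated value m + 1
   on s = t + w - m n places.  The admissible patterns are counted by choosing these
   classes one after the other, the value m taking the rest.  For a fixed pattern,
   subtracting m at the saturated places, moving them onto P_1, ..., P_s and clearing
   the other rational places is a bijection onto the divisors counted by C_{r+w-mn,s}. *)

From mathcomp Require Import all_boot finmap zify.
Set Implicit Arguments. Unset Strict Implicit. Unset Printing Implicit Defensive.

Lemma size_enumerates_bij (T U : eqType) (A : T -> Prop) (B : U -> Prop)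
    (sA : seq T) (sB : seq U) (f : T -> U) (g : U -> T) :
    enumerates sA A -> enumerates sB B ->
    (forall x, A x -> B (f x)) -> (forall y, B y -> A (g y)) ->
    (forall x, A x -> g (f x) = x) -> (forall y, B y -> f (g y) = y) ->
  size sA = size sB.
Proof.
move=> [uA memA] [uB memB] fAB gBA fK gK.
have f_inj : {in sA &, injective f}.
  by move=> x1 x2 /memA/fK {2}<- /memA/fK {2}<- ->.
rewrite -(size_map f); apply/perm_size/uniq_perm => //.
  by rewrite map_inj_in_uniq.
move=> y; apply/mapP/idP => [[x /memA Ax ->] | /memB By].
  exact/memB/fAB.
by exists (g y); [exact/memA/gBA | rewrite gK].
Qed.

Lemma size_partition (T : Type) (F : finType) (pi : T -> F) (good : pred F) (s : seq T) :
  all (fun x => good (pi x)) s ->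
  size s = \sum_(c | good c) count (fun x => pi x == c) s.
Proof.
elim: s => [|x s IH] /= ; first by rewrite big1.
case/andP => gx /IH ->; rewrite big_split /= -add1n; congr (_ + _).
rewrite (bigD1 (pi x)) //= eqxx big1 // => c /andP[_].
by rewrite eq_sym => /negbTE ->.
Qed.

Section FiberCount.
Variables (T V : finType) (code : nat -> V) (d : V) (a : nat -> nat).

(* [h] only prescribes [f] off [S]: it lets the induction in [card_fibered] shrink [S]
   while keeping [f] fixed. *)
Definition fibered K (S : {set T}) (h : T -> V) (f : {ffun T -> V}) : bool :=
  [forall i, if i \in S then (f i == d) || [exists v : 'I_K, f i == code v]
             else f i == h i]
  && [forall v : 'I_K, #|[set i in S | f i == code v]| == a v].

Lemma code_neq_last K v :
  {in gtn K.+1 &, injective code} -> v < K -> code v != code K.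
Proof.
move=> code_inj vK; apply: contra_neq (negbT (ltn_eqF vK)) => /code_inj.
by apply; rewrite inE /= ?ltnS // ltnW.
Qed.

Lemma fiber_setD K (S A : {set T}) (f : {ffun T -> V}) v :
  {in gtn K.+1 &, injective code} -> [set i in S | f i == code K] = A -> v < K ->
  [set i in S :\: A | f i == code v] = [set i in S | f i == code v].
Proof.
move=> code_inj <- vK; have code_vK := code_neq_last code_inj vK.
apply/setP => i; rewrite !inE; case: (f i =P code v) => [-> | _]; last by rewrite !andbF.
by rewrite (negbTE code_vK) andbF andbT.
Qed.

Lemma fibered_peel K (S A : {set T}) h (f : {ffun T -> V}) :
    {in gtn K.+1 &, injective code} -> {in gtn K.+1, forall u, code u != d} ->
  fibered K.+1 S h f && ([set i in S | f i == code K] == A) =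
  [&& A \subset S, #|A| == a K &
      fibered K (S :\: A) (fun i => if i \in A then code K else h i) f].
Proof.
move=> code_inj code_d; apply/idP/idP.
  case/andP => /andP[/forallP f_val /forallP f_cnt] /eqP defA; subst A.
  have AS : [set i in S | f i == code K] \subset S.
    by apply/subsetP => i; rewrite inE => /andP[].
  rewrite AS (f_cnt ord_max) /=; apply/andP; split.
    apply/forallP => i; rewrite in_setD !inE; have := f_val i.
    case: (i \in S) => /= [fi | //].
    case: (f i =P code K) => [-> | fiK] /=; first by rewrite eqxx.
    case/orP: fi => [-> // | /existsP[v /eqP fv]]; apply/orP; right; apply/existsP.
    have vK : v < K.
      by rewrite ltn_neqAle -ltnS ltn_ord andbT; apply/eqP => vK; apply: fiK; rewrite fv vK.
    by exists (Ordinal vK); rewrite fv.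
  apply/forallP => v; rewrite (fiber_setD code_inj erefl (ltn_ord v)).
  exact: (f_cnt (widen_ord (leqnSn K) v)).
case/and3P => AS /eqP cardA /andP[/forallP f_val /forallP f_cnt].
have defA : [set i in S | f i == code K] = A.
  apply/setP => i; rewrite inE; have := f_val i; rewrite in_setD.
  case iA: (i \in A) => /=; first by rewrite (subsetP AS) // => /eqP ->; rewrite eqxx.
  case: (i \in S) => //=; case/orP => [/eqP -> | /existsP[v /eqP ->]].
    by rewrite eq_sym; apply/negbTE/code_d; rewrite inE.
  exact/negbTE/code_neq_last.
rewrite defA eqxx andbT; apply/andP; split.
  apply/forallP => i; have := f_val i; rewrite in_setD.
  case iA: (i \in A) => /=.
    by rewrite (subsetP AS) // => /eqP ->; apply/orP; right; apply/existsP; exists ord_max.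
  case: (i \in S) => //= /orP[-> // | /existsP[v fv]].
  by apply/orP; right; apply/existsP; exists (widen_ord (leqnSn K) v).
apply/forallP => v; have [vK | Kv] := ltnP v K.
  by rewrite -(fiber_setD code_inj defA vK); exact: (f_cnt (Ordinal vK)).
have -> : nat_of_ord v = K by apply/eqP; rewrite eqn_leq Kv -ltnS ltn_ord.
by rewrite defA cardA.
Qed.

Lemma card_fibered K :
    {in gtn K &, injective code} -> {in gtn K, forall u, code u != d} ->
  forall (S : {set T}) (h : T -> V),
  #|[set f | fibered K S h f]| =
    \prod_(0 <= v < K) 'C(#|S| - \sum_(v.+1 <= u < K) a u, a v).
Proof.
elim: K => [|K IH] code_inj code_d S h.
  rewrite big_geq // -(cards1 [ffun i => if i \in S then d else h i]).
  apply: eq_card => f; rewrite !inE /fibered.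
  rewrite [X in _ && X](_ : _ = true) ?andbT; last by apply/forallP => -[].
  apply/forallP/eqP.
    move=> f_val; apply/ffunP => i; rewrite ffunE; have := f_val i.
    by case: (i \in S) => /=; [case/orP => [/eqP | /existsP[[]]] | move/eqP].
  by move=> -> i; rewrite ffunE; case: (i \in S); rewrite eqxx.
have code_injK : {in gtn K &, injective code}.
  by move=> u v uK vK; apply: code_inj; rewrite inE ltnW.
have code_dK : {in gtn K, forall u, code u != d}.
  by move=> u uK; apply: code_d; rewrite inE ltnW.
rewrite -sum1_card.
rewrite (partition_big (fun f : {ffun T -> V} => [set i in S | f i == code K]) predT) //=.
transitivity (\sum_(A : {set T} | (A \subset S) && (#|A| == a K))
    \prod_(0 <= v < K) 'C(#|S| - a K - \sum_(v.+1 <= u < K) a u, a v)).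
  rewrite [RHS]big_mkcond; apply: eq_bigr => A _; rewrite sum1_card.
  set h' := fun i => if i \in A then code K else h i.
  transitivity #|[set f | [&& A \subset S, #|A| == a K & fibered K (S :\: A) h' f]]|.
    by apply: eq_card => f; rewrite unfold_in /= !inE fibered_peel.
  case: (boolP ((A \subset S) && (#|A| == a K))) => [/andP[AS /eqP cardA] | notA];
    last first.
    by apply: eq_card0 => f; rewrite inE andbA (negbTE notA).
  have cardSA : #|S :\: A| = #|S| - a K by rewrite cardsD (setIidPr AS) cardA.
  rewrite -cardSA -(IH code_injK code_dK (S :\: A) h').
  by apply: eq_card => f; rewrite !inE AS cardA eqxx.
rewrite sum_nat_const.
have -> : #|[pred A : {set T} | (A \subset S) && (#|A| == a K)]| = 'C(#|S|, a K).
  by rewrite -cards_draws; apply: eq_card => A; rewrite inE.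
rewrite big_nat_recr //= [\sum_(K.+1 <= u < K.+1) _]big_geq // subn0 mulnC.
congr (_ * _); apply: eq_big_nat => v /andP[_ vK].
by rewrite big_nat_recr //= addnC subnDA.
Qed.
End FiberCount.

Section RankFirst.
Variables (n : nat) (A : {set 'I_n}).

Let ranking := enum A ++ enum (~: A).

Lemma mem_ranking i : i \in ranking.
Proof. by rewrite mem_cat !mem_enum inE; case: (i \in A). Qed.

Definition rank_first (i : 'I_n) : 'I_n := insubd i (index i ranking).

Lemma rank_firstE i : rank_first i = index i ranking :> nat.
Proof.
have size_ranking : size ranking = n by rewrite size_cat -!cardE cardsC card_ord.
by rewrite /rank_first insubdK // unfold_in /= -[X in _ < X]size_ranking index_mem mem_ranking.
Qed.

Lemma rank_first_inj : injective rank_first.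
Proof.
move=> i k /(congr1 val); rewrite /= !rank_firstE.
exact: index_inj (mem_ranking i) (mem_ranking k).
Qed.

Lemma rank_first_lt i : (rank_first i < #|A|) = (i \in A).
Proof.
rewrite rank_firstE index_cat mem_enum cardE.
case: ifP => iA; first by rewrite index_mem mem_enum.
by rewrite ltnNge leq_addr.
Qed.
End RankFirst.

Section Levels.
Variable m : nat.

(* Level [l >= 1] is the valuation [m - l], counted by [j_l]; level [0] stands for the
   saturated value [m + 1]; the remaining value [m] is left unconstrained. *)
Definition level_value (l : nat) : 'I_m.+2 := inord (if l == 0 then m.+1 else m - l).

Lemma level_valueE l : l <= m -> level_value l = (if l == 0 then m.+1 else m - l) :> nat.
Proof. by move=> lm; rewrite inordK //; case: eqP; lia. Qed.

Lemma level_value_inj : {in gtn m.+1 &, injective level_value}.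
Proof.
move=> l l'; rewrite !inE /= !ltnS => lm l'm /(congr1 val).
by rewrite /= !level_valueE //; case: l lm => [|l]; case: l' l'm => [|l'] /=; lia.
Qed.

Lemma level_value_neq_m : {in gtn m.+1, forall l, level_value l != inord m}.
Proof.
move=> l; rewrite inE /= ltnS => lm; rewrite -val_eqE /= level_valueE // inordK //.
by case: l lm => [|l] /=; lia.
Qed.

Lemma level_value_cover (x : 'I_m.+2) :
  (x == inord m) || [exists l : 'I_m.+1, x == level_value l].
Proof.
have xm : x <= m.+1 by rewrite -ltnS.
case: (ltngtP x m) => [xm' | mx | xE].
- have lm : m - x < m.+1 by rewrite ltnS leq_subr.
  apply/orP; right; apply/existsP; exists (Ordinal lm).
  rewrite -val_eqE /= level_valueE ?leq_subr // subn_eq0 leqNgt xm' /=.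
  by apply/eqP; lia.
- apply/orP; right; apply/existsP; exists ord0.
  by rewrite -val_eqE /= level_valueE //=; apply/eqP; lia.
- by apply/orP; left; rewrite -val_eqE /= inordK // xE.
Qed.

Lemma level_value_weight (x : 'I_m.+2) :
  x + \sum_(1 <= l < m.+1) l * (x == level_value l) = m + (x == level_value 0).
Proof.
have xm : x <= m.+1 by rewrite -ltnS.
rewrite -val_eqE /= level_valueE //=.
have -> : \sum_(1 <= l < m.+1) l * (x == level_value l) =
          \sum_(1 <= l < m.+1 | l == m - x) l.
  rewrite [RHS]big_mkcond /=; apply: eq_big_nat => l /andP[l1 lm].
  rewrite -val_eqE /= level_valueE; last by rewrite -ltnS.
  rewrite (_ : (l == 0) = false); last by case: l l1 {lm}.
  have -> : (x == m - l :> nat) = (l == m - x) by apply/eqP/eqP; lia.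
  by case: eqP; rewrite ?muln1 ?muln0.
by rewrite big_nat1_eq; case: ifP => /idP; case: eqP; lia.
Qed.

Lemma sum_levels n (c : {ffun 'I_n -> 'I_m.+2}) :
  \sum_i (c i : nat) + \sum_(1 <= l < m.+1) l * #|[set i | c i == level_value l]|
  = m * n + #|[set i | c i == level_value 0]|.
Proof.
have card_level l : #|[set i | c i == level_value l]| = \sum_i (c i == level_value l).
  by rewrite -sum1_card big_mkcond; apply: eq_bigr => i _; rewrite inE; case: eqP.
under eq_big_nat => l _ do rewrite card_level big_distrr.
rewrite card_level exchange_big -big_split /=.
under eq_bigr => i _ do rewrite level_value_weight.
by rewrite big_split sum_nat_const card_ord mulnC.
Qed.
End Levels.

Section RationalPart.
Variables (P : choiceType) (deg : P -> nat) (n : nat) (Pr : 'I_n -> P).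
Hypotheses (Pr_inj : injective Pr) (Pr_deg : forall i, deg (Pr i) = 1).

Definition rat_places : {fset P} := [fset Pr i | i : 'I_n]%fset.

Definition rat_index (x : P) : option 'I_n := [pick i | Pr i == x].

Lemma rat_indexE i : rat_index (Pr i) = Some i.
Proof.
rewrite /rat_index; case: pickP => [k /eqP/Pr_inj -> // | /(_ i)].
by rewrite eqxx.
Qed.

Lemma rat_indexN x : x \notin rat_places -> rat_index x = None.
Proof.
move=> xN; rewrite /rat_index; case: pickP => [i /eqP xE | //].
by move: xN; rewrite -xE in_imfset.
Qed.

Definition rat_update (D : pdivisor P) (v : 'I_n -> nat) : pdivisor P :=
  [fsfun x in (finsupp D `|` rat_places)%fset =>
     if rat_index x is Some i then v i else D x].

Lemma rat_update_rat D v i : rat_update D v (Pr i) = v i.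
Proof. by rewrite fsfun_fun rat_indexE in_fsetU in_imfset ?orbT. Qed.

Lemma rat_update_nrat D v x : x \notin rat_places -> rat_update D v x = D x.
Proof.
move=> xN; rewrite fsfun_fun rat_indexN // in_fsetU (negbTE xN) orbF.
by case: finsuppP.
Qed.

Lemma rat_update_eq (D E : pdivisor P) v :
    (forall x, x \notin rat_places -> E x = D x) -> (forall i, v i = D (Pr i)) ->
  rat_update E v = D.
Proof.
move=> ED vD; apply/fsfunP => x; case: (boolP (x \in rat_places)) => [| xN].
  by case/imfsetP => i _ ->; rewrite rat_update_rat.
by rewrite rat_update_nrat ?ED.
Qed.

Lemma ddeg_sub (D : pdivisor P) (S : {fset P}) :
  (finsupp D `<=` S)%fset -> ddeg deg D = \sum_(p <- S) D p * deg p.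
Proof.
move=> DS; apply: big_fset_incl => // p _ pD.
by rewrite fsfun_dflt.
Qed.

Lemma ddeg_split (D : pdivisor P) (S : {fset P}) :
    (finsupp D `<=` S)%fset -> (rat_places `<=` S)%fset ->
  ddeg deg D = \sum_i D (Pr i) + \sum_(p <- S | p \notin rat_places) D p * deg p.
Proof.
move=> DS RS; rewrite (ddeg_sub DS) (bigID (mem rat_places)) /=; congr (_ + _).
rewrite big_fset_condE (eq_fbigl _ (B := rat_places)); last first.
  by move=> p; rewrite !inE /= andb_idl // => /(fsubsetP RS).
rewrite big_imfset /=; last by move=> i k _ _; exact: Pr_inj.
by rewrite big_enum; apply: eq_bigr => i _; rewrite Pr_deg muln1.
Qed.

Lemma ddeg_rat_update (D : pdivisor P) v :
  ddeg deg (rat_update D v) + \sum_i D (Pr i) = ddeg deg D + \sum_i v i.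
Proof.
set S := (finsupp D `|` rat_places)%fset.
have DS : (finsupp D `<=` S)%fset by exact: fsubsetUl.
have RS : (rat_places `<=` S)%fset by exact: fsubsetUr.
rewrite (ddeg_split DS RS) (ddeg_split (finsupp_sub _ _ _) RS).
under eq_bigr => i _ do rewrite rat_update_rat.
under [X in _ + X + _]eq_bigr => p pN do rewrite rat_update_nrat //.
lia.
Qed.
End RationalPart.

Section Patterns.
Variables (P : choiceType) (deg : P -> nat) (n : nat) (Pr : 'I_n -> P).
Variables (m r t : nat) (j : nat -> nat).
Local Notation w := (\sum_(1 <= l < m.+1) l * j l).
Local Notation s := (t + w - m * n).
Hypothesis hlow : m * n <= t + w.

Definition pattern (D : pdivisor P) : {ffun 'I_n -> 'I_m.+2} :=
  [ffun i => inord (minn m.+1 (D (Pr i)))].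

Lemma patternE D i : pattern D i = minn m.+1 (D (Pr i)) :> nat.
Proof. by rewrite ffunE inordK // ltnS geq_minl. Qed.

Definition level_count l := if l == 0 then s else j l.

Definition admissible (c : {ffun 'I_n -> 'I_m.+2}) : bool :=
  [forall l : 'I_m.+1, #|[set i | c i == level_value m l]| == level_count l].

Lemma admissible_card c l : admissible c -> l <= m ->
  #|[set i | c i == level_value m l]| = level_count l.
Proof. by move=> /forallP c_adm lm; apply/eqP/(c_adm (Ordinal (lm : l < m.+1))). Qed.

Lemma admissible_sum c : admissible c -> \sum_i (c i : nat) = t.
Proof.
move=> c_adm; have := sum_levels c.
rewrite (admissible_card c_adm (leq0n m)).
under eq_big_nat => l /andP[l1 lm] do rewrite admissible_card // /level_count eqn0Ngt l1.
by rewrite /level_count /=; lia.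
Qed.

Lemma jcount_pattern D l : 1 <= l <= m ->
  jcount m Pr D l = #|[set i | pattern D i == level_value m l]|.
Proof.
case/andP=> l1 lm; apply: eq_card => i; rewrite !inE -val_eqE /= patternE level_valueE //.
by rewrite eqn0Ngt l1; apply/eqP/eqP; lia.
Qed.

Lemma degbar_pattern D : degbar m Pr D = \sum_i (pattern D i : nat).
Proof. by apply: eq_bigr => i _; rewrite patternE. Qed.

Lemma inU_pattern D :
  inU deg m Pr r t j D <-> ddeg deg D = r /\ admissible (pattern D).
Proof.
split=> [[dD bD jD] | [dD D_adm]]; last first.
  split=> //; first by rewrite degbar_pattern admissible_sum.
  move=> l /andP[l1 lm]; rewrite jcount_pattern ?l1 // admissible_card //.
  by rewrite /level_count eqn0Ngt l1.
have cnt l : 0 < l < m.+1 -> #|[set i | pattern D i == level_value m l]| = j l.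
  by move=> lr; rewrite -jD ?jcount_pattern.
split=> //; apply/forallP => l; rewrite /level_count.
have [-> | l0] := eqVneq (l : nat) 0; last by rewrite cnt // lt0n l0 ltn_ord.
have := sum_levels (pattern D); rewrite -degbar_pattern bD.
under eq_big_nat => k km do rewrite cnt //.
by move=> ->; rewrite addKn.
Qed.

Lemma level_countE l : 0 < l -> level_count l = j l.
Proof. by rewrite /level_count eqn0Ngt => ->. Qed.

Lemma card_admissible : #|[set c | admissible c]| =
  \prod_(1 <= l < m.+1) 'C(n - \sum_(l.+1 <= k < m.+1) j k, j l)
  * 'C(n - \sum_(1 <= k < m.+1) j k, s).
Proof.
have -> : [set c | admissible c] =
    [set c | fibered (level_value m) (inord m) level_count m.+1 setT (fun=> inord m) c].
  apply/setP => c; rewrite !inE /fibered.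
  rewrite (_ : [forall i, _] = true); last first.
    by apply/forallP => i; rewrite in_setT level_value_cover.
  by apply: eq_forallb => l; congr (_ == _); apply: eq_card => i; rewrite !inE.
rewrite card_fibered ?cardsT ?card_ord; last 2 first.
- exact: level_value_inj.
- exact: level_value_neq_m.
rewrite big_ltn // mulnC; congr (_ * _).
  apply: eq_big_nat => l /andP[l1 _]; rewrite level_countE //; congr (binomial (_ - _) _).
  by apply: eq_big_nat => k /andP[lk _]; rewrite level_countE // (ltn_trans l1 lk).
rewrite [level_count 0]/level_count /=; congr (binomial (_ - _) _).
by apply: eq_big_nat => k /andP[k1 _]; rewrite level_countE.
Qed.
End Patterns.

Section Count.
Variables (P : choiceType) (deg : P -> nat) (n : nat) (Pr : 'I_n -> P).
Hypotheses (Pr_inj : injective Pr) (Pr_deg : forall i, deg (Pr i) = 1).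
Variables (m r t : nat) (j : nat -> nat).
Hypothesis htr : t <= r.
Local Notation w := (\sum_(1 <= l < m.+1) l * j l).
Local Notation s := (t + w - m * n).
Hypothesis hlow : m * n <= t + w.
Local Notation inC_s := (inC deg Pr (r + w - m * n) s).
Variables (sU sC : seq (pdivisor P)).
Hypotheses (hU : enumerates sU (inU deg m Pr r t j)) (hC : enumerates sC inC_s).

Section Fiber.
Variable c : {ffun 'I_n -> 'I_m.+2}.
Hypothesis c_adm : admissible t j c.

Let B := [set i | c i == level_value m 0].
Let rank := rank_first B.
Let unrank := invF (@rank_first_inj _ B).

Lemma in_B i : (i \in B) = (c i == m.+1 :> nat).
Proof. by rewrite inE -val_eqE /= level_valueE. Qed.

Lemma card_B : #|B| = s.
Proof. by rewrite (admissible_card c_adm (leq0n m)). Qed.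

Lemma rank_lt i : (rank i < s) = (i \in B).
Proof. by rewrite -card_B rank_first_lt. Qed.

Definition lower (D : pdivisor P) : pdivisor P :=
  rat_update Pr D (fun k => if k < s then D (Pr (unrank k)) - m else 0).

Definition raise (E : pdivisor P) : pdivisor P :=
  rat_update Pr E (fun i => if i \in B then E (Pr (rank i)) + m else c i).

Lemma pattern_in_B D i : pattern Pr m D = c -> (i \in B) = (m < D (Pr i)).
Proof. by move=> cD; rewrite in_B -cD patternE; apply/eqP/idP; lia. Qed.

Lemma pattern_notin_B D i : pattern Pr m D = c -> i \notin B -> c i = D (Pr i) :> nat.
Proof. by move=> cD; rewrite (pattern_in_B _ cD) -cD patternE; lia. Qed.

Lemma raiseK D : pattern Pr m D = c -> raise (lower D) = D.
Proof.
move=> cD; apply: rat_update_eq => // [x xN | i]; first exact: rat_update_nrat.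
rewrite rat_update_rat // rank_lt /unrank invF_f.
case: ifP => iB; last by rewrite (pattern_notin_B cD) ?iB.
by rewrite iB subnK // ltnW // -(pattern_in_B _ cD).
Qed.

Lemma lowerK (E : pdivisor P) :
  (forall k : 'I_n, s <= k -> E (Pr k) = 0) -> lower (raise E) = E.
Proof.
move=> E0; apply: rat_update_eq => // [x xN | k]; first exact: rat_update_nrat.
rewrite rat_update_rat //; case: ifP => ks; last by rewrite E0 // leqNgt ks.
have : unrank k \in B by rewrite -rank_lt /rank /unrank f_invF.
by move=> ->; rewrite /rank /unrank f_invF addnK.
Qed.

Lemma admissible_sum_split : t = #|B| + #|B| * m + \sum_(i | i \notin B) c i.
Proof.
rewrite -(admissible_sum hlow c_adm) (bigID (mem B)) /= -mulnS.
by rewrite (eq_bigr (fun=> m.+1)) ?sum_nat_const // => i; rewrite in_B => /eqP.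
Qed.

Lemma ddeg_raise (E : pdivisor P) : (forall k : 'I_n, s <= k -> E (Pr k) = 0) ->
  ddeg deg (raise E) + s = ddeg deg E + t.
Proof.
move=> E0; have := ddeg_rat_update Pr_inj Pr_deg E
  (fun i => if i \in B then E (Pr (rank i)) + m else c i).
have -> : \sum_i E (Pr i) = \sum_(i in B) E (Pr (rank i)).
  rewrite (reindex_inj (@rank_first_inj _ B)) [RHS]big_mkcond /=.
  by apply: eq_bigr => i _; case: ifPn => // iNB; rewrite E0 // leqNgt rank_lt.
rewrite [\sum_i (if _ then _ else _)](bigID (mem B)) /=.
rewrite [X in _ = _ + (X + _)](eq_bigr (fun i => E (Pr (rank i)) + m)) => [|i -> //].
rewrite [X in _ = _ + (_ + X)](eq_bigr (fun i => c i : nat)) => [|i /negbTE -> //].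
rewrite big_split sum_nat_const /= card_B.
have := admissible_sum_split; rewrite card_B /raise.
(* [lia] must see the degree of [raise E], the sum over [~: B] and [s] as atoms. *)
set X := ddeg deg (rat_update _ _ _); set Y := \sum_(i | _) _.
move: (t + w - m * n) => s0; lia.
Qed.

Lemma raise_pattern E : inC_s E -> pattern Pr m (raise E) = c.
Proof.
move=> [_ E_supp]; apply/ffunP => i; apply: ord_inj.
rewrite patternE /raise rat_update_rat //.
case: ifPn => iB; last by apply/minn_idPr; rewrite -ltnS.
have E_pos : 0 < E (Pr (rank i)) by apply: (E_supp _).1; rewrite rank_lt.
by move: iB; rewrite in_B => /eqP ->; apply/minn_idPl; lia.
Qed.

Lemma lower_inC D : inU deg m Pr r t j D -> pattern Pr m D = c -> inC_s (lower D).
Proof.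
move=> [dD _ _] cD.
have lower_rat k : lower D (Pr k) = if k < s then D (Pr (unrank k)) - m else 0.
  exact: rat_update_rat.
have lower_vanish (k : 'I_n) : s <= k -> lower D (Pr k) = 0.
  by rewrite lower_rat ltnNge => ->.
split=> [| k]; last split=> [ks | /lower_vanish //].
  by have := ddeg_raise lower_vanish; rewrite raiseK // dD; lia.
have : unrank k \in B by rewrite -rank_lt /rank /unrank f_invF.
by rewrite lower_rat ks (pattern_in_B _ cD) subn_gt0.
Qed.

Lemma raise_inU E : inC_s E -> inU deg m Pr r t j (raise E).
Proof.
move=> EC; apply/(inU_pattern deg Pr r hlow); rewrite raise_pattern //; split=> //.
have [dE E_supp] := EC.
have := ddeg_raise (E := E) (fun k sk => (E_supp k).2 sk); rewrite dE; lia.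
Qed.

Lemma size_fiber : size [seq D <- sU | pattern Pr m D == c] = size sC.
Proof.
have [uU memU] := hU.
apply: (size_enumerates_bij
  (A := fun D => inU deg m Pr r t j D /\ pattern Pr m D = c) (f := lower) (g := raise) _ hC).
- split=> [| D]; first exact: filter_uniq.
  rewrite mem_filter; split=> [/andP[/eqP cD /memU DU] // | [DU ->]].
  by rewrite eqxx; apply/memU.
- by move=> D [DU cD]; exact: lower_inC.
- by move=> E EC; split; [exact: raise_inU | exact: raise_pattern].
- by move=> D [_ cD]; exact: raiseK.
- by move=> E [_ E_supp]; apply: lowerK => k sk; exact: (E_supp k).2.
Qed.
End Fiber.

Lemma size_U :
  size sU = #|[set c : {ffun 'I_n -> 'I_m.+2} | admissible t j c]| * size sC.
Proof.
rewrite (size_partition (pi := pattern Pr m) (good := admissible t j)); last first.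
  by apply/allP => D /hU.2 /(inU_pattern deg Pr r hlow) [].
rewrite -sum_nat_const; apply: eq_big => [c | c c_adm]; first by rewrite inE.
by rewrite -size_filter size_fiber.
Qed.
End Count.

Theorem lemma3p5
  (P : choiceType) (deg : P -> nat)
  (deg_pos : forall p, 0 < deg p)
  (deg_fin : forall d, exists s : seq P, forall p, deg p <= d -> p \in s)
  (n : nat) (Pr : 'I_n -> P) (Pr_inj : injective Pr)
  (Pr_deg : forall i, deg (Pr i) = 1)
  (Pr_all : forall p, deg p = 1 -> exists i, Pr i = p)
  (m : nat) (hm : 1 <= m)
  (r t : nat) (j : nat -> nat) (htr : t <= r)
  (hlow : m * n <= t + \sum_(1 <= l < m.+1) l * j l)
  (hup : t + \sum_(1 <= l < m.+1) l.+1 * j l <= m.+1 * n)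
  (sU sC : seq (pdivisor P))
  (hU : enumerates sU (inU deg m Pr r t j))
  (hC : enumerates sC (inC deg Pr (r + \sum_(1 <= l < m.+1) l * j l - m * n)
                                  (t + \sum_(1 <= l < m.+1) l * j l - m * n))) :
  size sU =
    (\prod_(1 <= l < m.+1) 'C(n - \sum_(l.+1 <= k < m.+1) j k, j l))
    * 'C(n - \sum_(1 <= k < m.+1) j k, t + \sum_(1 <= l < m.+1) l * j l - m * n)
    * size sC.
Proof. by rewrite (size_U Pr_inj Pr_deg htr hlow hU hC) card_admissible. Qed.
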